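(* Let $A=(a_1,\ldots,a_q)\in\mathbb{R}^{p\times q}$ be entrywise nonnegative, $\eta_1,\eta_2>0$, $\gamma>0$, $\mathcal{C}=\{(W,X)\in\mathbb{R}^{p\times n}\times\mathbb{R}^{n\times q}\mid W\ge0,\ X\ge0\}$ (entrywise), and let $(W^*,X^* )$ be a d-stationary point of $$\min_{W,X}\ \tfrac12\|A-WX\|_F^2+\tfrac{\eta_1}{2}\|W\|_F^2+\tfrac{\eta_2}{2}\|X\|_F^2+\gamma\sum_{j\in[q]}T_{1,n,1}(x_j)+\delta_{\mathcal C}(W,X),$$ where $x_j$ is the $j$-th column of $X$. If $$\gamma>\max_{j\in[q]}\frac{\|a_j\|_2}{\sqrt2}\Big(\frac{\|A\|_F}{\sqrt{\eta_1}}+\sqrt{\eta_2}\Big),$$ then $T_{1,n,1}(x_j^* )=0$ (i.e., $x_j^*$ has at most one nonzero entry) for all $j\in[q]$.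
   Context: $T_{1,n,1}(x)$ is the sum of the $n-1$ smallest values among $|x_1|,\ldots,|x_n|$. $\delta_{\mathcal C}$ is the indicator function of $\mathcal C$. Feasible cone $\mathcal{F}(z;\mathcal{C})=\{d\mid \exists\varsigma'>0:\ z+\varsigma d\in\mathcal{C}\ \forall\varsigma\in(0,\varsigma')\}$. A point of $\mathcal C$ is d-stationary if the directional derivative of the objective there is $\ge0$ in every direction of $\mathcal{F}(\cdot;\mathcal{C})$. *)

From HB Require Import structures.
From mathcomp Require Import all_boot all_order all_algebra.
From mathcomp Require Import all_classical all_reals all_analysis.
Set Implicit Arguments. Unset Strict Implicit. Unset Printing Implicit Defensive.
Import Order.TTheory GRing.Theory Num.Theory.
Import numFieldNormedType.Exports.
Local Open Scope ring_scope.
Local Open Scope classical_set_scope.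

Definition sqfrob (R : realType) (m k : nat) (M : 'M[R]_(m, k)) : R :=
  \sum_(i < m) \sum_(j < k) M i j ^+ 2.

Definition frob (R : realType) (m k : nat) (M : 'M[R]_(m, k)) : R :=
  Num.sqrt (sqfrob M).

Definition norm2 (R : realType) (m : nat) (v : 'cV[R]_m) : R :=
  Num.sqrt (\sum_(i < m) v i 0 ^+ 2).

Definition T1n1 (R : realType) (n : nat) (x : 'cV[R]_n) : R :=
  \sum_(i < n.-1) nth 0 (sort <=%R [seq `|x k 0| | k <- enum 'I_n]) i.

Definition mx_nonneg (R : realType) (m k : nat) (M : 'M[R]_(m, k)) : bool :=
  [forall i, forall j, 0 <= M i j].

Definition inC (R : realType) (p n q : nat) (W : 'M[R]_(p, n)) (X : 'M[R]_(n, q))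
  : bool := mx_nonneg W && mx_nonneg X.

Definition fobj (R : realType) (p n q : nat) (A : 'M[R]_(p, q))
  (eta1 eta2 gamma : R) (W : 'M[R]_(p, n)) (X : 'M[R]_(n, q)) : R :=
  2^-1 * sqfrob (A - W *m X) + eta1 / 2 * sqfrob W + eta2 / 2 * sqfrob X
  + gamma * \sum_(j < q) T1n1 (col j X).

Definition Phi (R : realType) (p n q : nat) (A : 'M[R]_(p, q))
  (eta1 eta2 gamma : R) (W : 'M[R]_(p, n)) (X : 'M[R]_(n, q)) : \bar R :=
  ((fobj A eta1 eta2 gamma W X)%:E + (if inC W X then 0 else +oo))%E.

Definition feasible_dir (R : realType) (p n q : nat)
  (W : 'M[R]_(p, n)) (X : 'M[R]_(n, q)) (DW : 'M[R]_(p, n)) (DX : 'M[R]_(n, q))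
  : Prop :=
  exists2 s' : R, 0 < s' &
    forall s : R, 0 < s < s' -> inC (W + s *: DW) (X + s *: DX).

Definition dstationary (R : realType) (p n q : nat) (A : 'M[R]_(p, q))
  (eta1 eta2 gamma : R) (W : 'M[R]_(p, n)) (X : 'M[R]_(n, q)) : Prop :=
  inC W X /\
  forall (DW : 'M[R]_(p, n)) (DX : 'M[R]_(n, q)),
    feasible_dir W X DW DX ->
    exists l : \bar R,
      ((fun t : R => ((Phi A eta1 eta2 gamma (W + t *: DW) (X + t *: DX)
                        - Phi A eta1 eta2 gamma W X) * (t^-1)%:E)%E)
         @ 0^'+ --> l) /\ (0 <= l)%E.

(* Testing d-stationarity along (-W, 0), which shrinks W, gives
   4 eta1 |W|_F^2 <= |A|_F^2.  If T(x_j) <> 0, some entry X_ij > 0 is not a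
   largest entry of x_j, so decreasing it lowers T(x_j) at unit rate; testing
   along (0, -E_ij) and using W, X >= 0 then gives
   gamma <= <a_j, w_i> <= |a_j| |W|_F <= |a_j| |A|_F / (2 sqrt eta1),
   which contradicts the lower bound on gamma. *)

From HB Require Import structures.
From mathcomp Require Import all_boot all_order all_algebra.
From mathcomp Require Import all_classical all_reals all_analysis.
From mathcomp Require Import ring lra.
Import Order.TTheory GRing.Theory Num.Theory.
Import numFieldNormedType.Exports.
Local Open Scope ring_scope.
Local Open Scope classical_set_scope.

Lemma sorted_le_last d (T : porderType d) (x0 : T) (s : seq T) :
  sorted <=%O s -> {in s, forall v, (v <= last x0 s)%O}.
Proof.
move=> s_sorted v vs; have s_gt0 : (0 < size s)%N by case: s {s_sorted} vs.
rewrite -(nth_index x0 vs) -nth_last.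
apply: le_sorted_leq_nth => //; rewrite ?inE ?index_mem ?prednK //.
by rewrite -ltnS prednK ?index_mem.
Qed.

Lemma sum_nth_belast (V : zmodType) (s : seq V) :
  \sum_(i < (size s).-1) nth 0 s i = \sum_(v <- s) v - last 0 s.
Proof.
case/lastP: s => [|s y]; first by rewrite big_ord0 big_nil subr0.
rewrite size_rcons big_rcons last_rcons addrK (big_nth 0) big_mkord.
by apply: eq_bigr => i _; rewrite nth_rcons ltn_ord.
Qed.

Section SparsityPenalty.
Set Implicit Arguments.
Context {R : realType}.

Lemma T1n1E n (x : 'cV[R]_n) :
  T1n1 x = \sum_k `|x k 0| - \big[Num.max/0]_k `|x k 0|.
Proof.
rewrite /T1n1; set l := [seq _ | _ <- _]; set s := sort _ l.
have s_perm : perm_eq s l by rewrite perm_sort.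
have -> : n.-1 = (size s).-1 by rewrite (perm_size s_perm) size_map size_enum_ord.
have s_sorted : sorted <=%R s by apply: sort_sorted; exact: le_total.
have l_ge0 : {in l, forall v, 0 <= v} by move=> _ /mapP[k _ ->].
rewrite sum_nth_belast (perm_big _ s_perm) big_map big_enum; congr (_ - _).
apply/le_anti/andP; split.
  have := mem_last 0 s; rewrite inE => /orP[/eqP -> |].
    exact: bigmax_ge_id.
  by rewrite (perm_mem s_perm) => /mapP[k _ ->]; apply: le_bigmax.
have last_ge0 : 0 <= last 0 s.
  by have := mem_last 0 s; rewrite inE (perm_mem s_perm) => /orP[/eqP -> //|/l_ge0].
apply: bigmax_le => // k _; apply: sorted_le_last => //.
by rewrite (perm_mem s_perm); apply: map_f; rewrite mem_enum.
Qed.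

Lemma T1n1_subr_delta n (x : 'cV[R]_n) (i m : 'I_n) (t : R) :
  i != m -> (forall k, `|x k 0| <= `|x m 0|) -> 0 <= t <= x i 0 ->
  T1n1 (x - t *: delta_mx i 0) = T1n1 x - t.
Proof.
move=> im x_le /andP[t_ge0 t_le].
set y := x - _; have yE k : y k 0 = x k 0 - t * (k == i)%:R.
  by rewrite !mxE eqxx andbT.
have y_im k : k != i -> `|y k 0| = `|x k 0|.
  by move=> ki; rewrite yE (negbTE ki) mulr0 subr0.
have y_i : `|y i 0| = `|x i 0| - t.
  by rewrite yE eqxx mulr1 !ger0_norm ?subr_ge0 // (le_trans t_ge0).
have maxE (z : 'cV[R]_n) : (forall k, `|z k 0| <= `|z m 0|) ->
    \big[Num.max/0]_k `|z k 0| = `|z m 0|.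
  by move=> z_le; apply/le_anti; rewrite bigmax_le ?le_bigmax.
have y_le k : `|y k 0| <= `|y m 0|.
  rewrite (y_im m) 1?eq_sym //; have [->|ki] := eqVneq k i; last by rewrite y_im.
  by rewrite y_i (le_trans _ (x_le i)) // lerBlDr lerDl.
rewrite !T1n1E !maxE // (bigD1 i) //= [in RHS](bigD1 i) //= y_i (y_im m) 1?eq_sym //.
rewrite (eq_bigr _ y_im); ring.
Qed.

Lemma T1n1_descent n (x : 'cV[R]_n) :
  (forall k, 0 <= x k 0) -> T1n1 x != 0 ->
  exists i, 0 < x i 0 /\
    forall t, 0 <= t <= x i 0 -> T1n1 (x - t *: delta_mx i 0) = T1n1 x - t.
Proof.
case: n x => [|n] x x_ge0 T_neq0; first by rewrite T1n1E !big_ord0 subrr eqxx in T_neq0.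
pose m := [arg max_(k > ord0) `|x k 0|]%O.
have x_le k : `|x k 0| <= `|x m 0| by rewrite /m; case: arg_maxP => // j _; apply.
have [i /andP[im xi_neq0]] : exists i, (i != m) && (x i 0 != 0).
  apply/existsP; apply: contraNT T_neq0 => /existsPn x_eq0.
  have maxE : \big[Num.max/0]_k `|x k 0| = `|x m 0|.
    by apply/le_anti; rewrite bigmax_le ?le_bigmax.
  rewrite T1n1E maxE (bigD1 m) //= big1 ?addr0 ?subrr // => k km.
  by move: (x_eq0 k); rewrite km negbK => /eqP ->; rewrite normr0.
exists i; split; first by rewrite lt_def xi_neq0 x_ge0.
by move=> t; exact: T1n1_subr_delta im x_le.
Qed.

End SparsityPenalty.

Lemma sqr_sum_mul_le (R : realDomainType) (I : finType) (a b : I -> R) :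
  (\sum_i a i * b i) ^+ 2 <= (\sum_i a i ^+ 2) * (\sum_i b i ^+ 2).
Proof.
set S := \sum_i _; set P := \sum_i _; set Q := \sum_i _.
have Q_ge0 : 0 <= Q by rewrite sumr_ge0 // => i _; apply: sqr_ge0.
have discr_ge0 : 0 <= Q * (Q * P - S ^+ 2).
  have -> : Q * (Q * P - S ^+ 2) = \sum_i (Q * a i - S * b i) ^+ 2.
    rewrite (eq_bigr (fun i => Q ^+ 2 * a i ^+ 2 - 2 * Q * S * (a i * b i)
                               + S ^+ 2 * b i ^+ 2)) => [|i _]; last by ring.
    by rewrite big_split sumrB /= -!mulr_sumr -/P -/Q -/S; ring.
  by rewrite sumr_ge0 // => i _; apply: sqr_ge0.
have [Q_gt0|] := ltrP 0 Q; first by rewrite mulrC -subr_ge0 -(pmulr_rge0 _ Q_gt0).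
move=> Q_le0; have {Q_le0 Q_ge0} /eqP : Q = 0 by apply/le_anti/andP.
rewrite psumr_eq0 => [/allP b_eq0|i _]; last exact: sqr_ge0.
have -> : S = 0.
  rewrite /S big1 // => i _.
  by have /[!sqrf_eq0]/eqP -> := b_eq0 i (mem_index_enum i); rewrite mulr0.
by rewrite expr0n mulr_ge0 // sumr_ge0 // => i _; apply: sqr_ge0.
Qed.

Section Frobenius.
Set Implicit Arguments.
Context {R : realType}.

Lemma mx_nonnegP m k (M : 'M[R]_(m, k)) :
  reflect (forall i j, 0 <= M i j) (mx_nonneg M).
Proof.
apply: (iffP forallP) => [M_ge0 i j | M_ge0 i]; first exact: (forallP (M_ge0 i)).
by apply/forallP => j; apply: M_ge0.
Qed.

Definition frobdot m k (M N : 'M[R]_(m, k)) : R := \sum_i \sum_j M i j * N i j.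

Lemma sqfrobDZ m k (M N : 'M[R]_(m, k)) t :
  sqfrob (M + t *: N) = sqfrob M + 2 * t * frobdot M N + t ^+ 2 * sqfrob N.
Proof.
rewrite /sqfrob /frobdot !mulr_sumr -!big_split /=; apply: eq_bigr => i _.
by rewrite !mulr_sumr -!big_split /=; apply: eq_bigr => j _; rewrite !mxE; ring.
Qed.

Lemma frobdotBl m k (M N P : 'M[R]_(m, k)) :
  frobdot (M - N) P = frobdot M P - frobdot N P.
Proof.
rewrite /frobdot -sumrB; apply: eq_bigr => i _; rewrite -sumrB.
by apply: eq_bigr => j _; rewrite !mxE mulrBl.
Qed.

Lemma frobdotNr m k (M N : 'M[R]_(m, k)) : frobdot M (- N) = - frobdot M N.
Proof.
rewrite /frobdot -sumrN; apply: eq_bigr => i _; rewrite -sumrN.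
by apply: eq_bigr => j _; rewrite !mxE mulrN.
Qed.

Lemma frobdotmm m k (M : 'M[R]_(m, k)) : frobdot M M = sqfrob M.
Proof. by apply: eq_bigr => i _; apply: eq_bigr => j _; rewrite expr2. Qed.

Lemma frobdot_ge0 m k (M N : 'M[R]_(m, k)) :
  mx_nonneg M -> mx_nonneg N -> 0 <= frobdot M N.
Proof.
move=> /mx_nonnegP M_ge0 /mx_nonnegP N_ge0.
by do 2 (apply: sumr_ge0 => ? _); apply: mulr_ge0.
Qed.

Lemma sqfrob_ge0 m k (M : 'M[R]_(m, k)) : 0 <= sqfrob M.
Proof. by do 2 (apply: sumr_ge0 => ? _); apply: sqr_ge0. Qed.

Lemma sum_mul_le_norm2 m (u v : 'cV[R]_m) :
  \sum_r u r 0 * v r 0 <= norm2 u * norm2 v.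
Proof.
have sqr_sum_ge0 (w : 'cV[R]_m) : 0 <= \sum_r w r 0 ^+ 2.
  by rewrite sumr_ge0 // => r _; apply: sqr_ge0.
rewrite /norm2 -sqrtrM // (le_trans (ler_norm _)) // -sqrtr_sqr ler_sqrt.
  exact: sqr_sum_mul_le.
by rewrite mulr_ge0.
Qed.

Lemma norm2_col_le_frob m k (M : 'M[R]_(m, k)) j : norm2 (col j M) <= frob M.
Proof.
rewrite ler_sqrt ?sqfrob_ge0 //; apply: ler_sum => i _.
rewrite mxE (bigD1 j) //= lerDl.
by apply: sumr_ge0 => ? _; apply: sqr_ge0.
Qed.

Lemma frobdot_delta m k (M : 'M[R]_(m, k)) i j : frobdot M (delta_mx i j) = M i j.
Proof.
rewrite /frobdot (bigD1 i) //= (bigD1 j) //= mxE !eqxx mulr1.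
rewrite !big1 ?addr0 // => [a ai|b bj]; last by rewrite mxE (negbTE bj) andbF mulr0.
by rewrite big1 // => b _; rewrite mxE (negbTE ai) mulr0.
Qed.

Lemma frobdot_mul_delta m k l (M : 'M[R]_(m, k)) (N : 'M[R]_(m, l)) i j :
  frobdot M (N *m delta_mx i j) = \sum_r M r j * N r i.
Proof.
have NE a b : (N *m delta_mx i j) a b = N a i * (b == j)%:R.
  rewrite mxE (bigD1 i) //= big1 => [|c ci]; last by rewrite mxE (negbTE ci) mulr0.
  by rewrite mxE eqxx addr0.
apply: eq_bigr => a _; rewrite (bigD1 j) //= big1 => [|b bj].
  by rewrite NE eqxx mulr1 addr0.
by rewrite NE (negbTE bj) !mulr0.
Qed.

Lemma mx_nonneg_mul m k l (M : 'M[R]_(m, k)) (N : 'M[R]_(k, l)) :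
  mx_nonneg M -> mx_nonneg N -> mx_nonneg (M *m N).
Proof.
move=> /mx_nonnegP M_ge0 /mx_nonnegP N_ge0; apply/mx_nonnegP => a b.
by rewrite mxE sumr_ge0 // => c _; apply: mulr_ge0.
Qed.

Lemma col_subr_delta m k (M : 'M[R]_(m, k)) i j t j' :
  col j' (M - t *: delta_mx i j) =
  if j' == j then col j M - t *: delta_mx i 0 else col j' M.
Proof.
apply/matrixP => a b; rewrite ord1.
case: eqVneq => [->|j'j]; rewrite !mxE ?eqxx ?andbT //.
by rewrite (negbTE j'j) andbF mulr0 subr0.
Qed.

End Frobenius.

Section Stationarity.
Set Implicit Arguments.
Context {R : realType}.

Lemma cvg_at_right0_affine (f : R -> \bar R) (c d e : R) :
  0 < e -> (forall t, 0 < t < e -> f t = (c + d * t)%:E) -> f @ 0^'+ --> c%:E.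
Proof.
move=> e_gt0 fE.
have affine_cvg : (fun t => (c + d * t)%:E) @ 0^'+ --> c%:E.
  apply/cvg_EFin; first by near=> t.
  apply: cvg_at_right_filter.
  have := cvgD (cvg_cst c) (cvgM (cvg_cst d) (@cvg_id _ (nbhs (0 : R)))).
  by rewrite mulr0 addr0; apply.
apply: cvg_trans affine_cvg; apply: near_eq_cvg; near=> t.
rewrite fE //; apply/andP; split; near: t.
  exact: nbhs_right_gt.
exact: nbhs_right_lt.
Unshelve. all: end_near.
Qed.

Context {p n q : nat} {A : 'M[R]_(p, q)} {eta1 eta2 gamma : R}.
Context {W : 'M[R]_(p, n)} {X : 'M[R]_(n, q)}.
Hypothesis stat : dstationary A eta1 eta2 gamma W X.

Lemma dstationary_slope_ge0 (DW : 'M[R]_(p, n)) (DX : 'M[R]_(n, q)) (c d e : R) :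
  0 < e -> (forall t, 0 < t < e -> inC (W + t *: DW) (X + t *: DX)) ->
  (forall t, 0 < t < e ->
     fobj A eta1 eta2 gamma (W + t *: DW) (X + t *: DX)
     = fobj A eta1 eta2 gamma W X + c * t + d * t ^+ 2) ->
  0 <= c.
Proof.
move=> e_gt0 feas fE; have [WX_C /(_ DW DX)] := stat.
case=> [|l [l_cvg l_ge0]]; first by exists e.
suff l_eq : l = c%:E by rewrite -lee_fin -l_eq.
apply: (cvg_unique (@ereal_hausdorff R) l_cvg).
apply: (@cvg_at_right0_affine _ c d e e_gt0) => t /[dup] /andP[t_gt0 _] te.
rewrite /Phi feas // WX_C fE // !adde0 -EFinB -EFinM.
by congr (_%:E); field; rewrite gt_eqF.
Qed.

Lemma dstationary_sqfrob_le : 4 * eta1 * sqfrob W <= sqfrob A.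
Proof.
have [/andP[/mx_nonnegP W_ge0 X_C] _] := stat.
have slope_ge0 : 0 <= frobdot (A - W *m X) (W *m X) - eta1 * sqfrob W.
  apply: (@dstationary_slope_ge0 (- W) 0 _
    (2^-1 * sqfrob (W *m X) + eta1 / 2 * sqfrob (- W)) 1 ltr01)
    => t /andP[t_gt0 t_lt1]; rewrite scaler0 addr0.
  - rewrite /inC X_C andbT; apply/mx_nonnegP => a b.
    by rewrite !mxE; have := W_ge0 a b; nra.
  - rewrite /fobj; have -> : A - (W + t *: - W) *m X = (A - W *m X) + t *: (W *m X).
      by rewrite mulmxDl -scalemxAl mulNmx scalerN opprD opprK addrA.
    by rewrite !sqfrobDZ frobdotNr frobdotmm; field.
(* 0 <= |A - 2 W X|^2 bounds the slope's first term by |A|^2 / 4. *)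
have := sqfrob_ge0 (A + (-2) *: (W *m X)).
by rewrite sqfrobDZ; move: slope_ge0; rewrite frobdotBl frobdotmm; lra.
Qed.

Lemma dstationary_le_dot_col j : 0 <= eta2 -> T1n1 (col j X) != 0 ->
  exists i, gamma <= \sum_r A r j * W r i.
Proof.
move=> eta2_ge0 T_neq0; have [/andP[W_C X_C] _] := stat.
have /mx_nonnegP X_ge0 := X_C.
have [i [Xij_gt0 descent]] : exists i, 0 < X i j /\ forall t, 0 <= t <= X i j ->
    T1n1 (col j X - t *: delta_mx i 0) = T1n1 (col j X) - t.
  have [k|i] := T1n1_descent _ _ T_neq0; first by rewrite mxE.
  by rewrite mxE; exists i.
exists i; pose E := delta_mx i j : 'M[R]_(n, q).
have slope_ge0 : 0 <= frobdot (A - W *m X) (W *m E) - eta2 * X i j - gamma.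
  apply: (@dstationary_slope_ge0 0 (- E) _
    (2^-1 * sqfrob (W *m E) + eta2 / 2 * sqfrob (- E)) _ Xij_gt0)
    => t /andP[t_gt0 t_lt]; rewrite scaler0 addr0 scalerN.
  - rewrite /inC W_C; apply/mx_nonnegP => a b; rewrite !mxE.
    case: ((a == i) && (b == j)) / boolP => [/andP[/eqP -> /eqP ->]|_] /=.
      by rewrite mulr1 subr_ge0 ltW.
    by rewrite mulr0 subr0 X_ge0.
  - rewrite /fobj.
    have -> : A - W *m (X - t *: E) = (A - W *m X) + t *: (W *m E).
      by rewrite mulmxBr -scalemxAr opprB addrA addrAC.
    have -> : \sum_j' T1n1 (col j' (X - t *: E)) = \sum_j' T1n1 (col j' X) - t.
      rewrite (bigD1 j) //= [in RHS](bigD1 j) //= col_subr_delta eqxx descent ?ltW //.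
      rewrite (eq_bigr (fun j' => T1n1 (col j' X))) => [|j' j'j]; first by ring.
      by rewrite col_subr_delta (negbTE j'j).
    by rewrite -scalerN !sqfrobDZ frobdotNr frobdot_delta; field.
have WXE_ge0 : 0 <= frobdot (W *m X) (W *m E).
  apply: frobdot_ge0; apply: mx_nonneg_mul => //.
  by apply/mx_nonnegP => a b; rewrite mxE.
move: slope_ge0; rewrite frobdotBl frobdot_mul_delta; nra.
Qed.

Lemma dstationary_frob_le : 0 <= eta1 -> 2 * Num.sqrt eta1 * frob W <= frob A.
Proof.
move=> eta1_ge0; have four : 4 = 2 ^+ 2 :> R by rewrite expr2 -natrM.
have <- : Num.sqrt (4 * eta1 * sqfrob W) = 2 * Num.sqrt eta1 * frob W.
  by rewrite !sqrtrM ?mulr_ge0 // four sqrtr_sqr ger0_norm.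
by rewrite ler_sqrt ?sqfrob_ge0 ?dstationary_sqfrob_le.
Qed.

End Stationarity.

Lemma mul_le_threshold (R : realType) (a w F eta1 eta2 : R) :
  0 <= a -> 0 <= w -> 0 < eta1 -> 2 * Num.sqrt eta1 * w <= F ->
  a * w <= a / Num.sqrt 2 * (F / Num.sqrt eta1 + Num.sqrt eta2).
Proof.
set s1 := Num.sqrt eta1; set s2 := Num.sqrt 2 => a_ge0 w_ge0 eta1_gt0 wF.
have s1_gt0 : 0 < s1 by rewrite sqrtr_gt0.
have s2_gt0 : 0 < s2 by rewrite sqrtr_gt0.
have s2_le2 : s2 <= 2.
  by rewrite -[leRHS](@ger0_norm _ 2) // -sqrtr_sqr ler_sqrt // expr2 ler_peMl // ler1n.
apply: (@le_trans _ _ (a / s2 * (F / s1))).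
  have aws_ge0 : 0 <= a * w * s1 by rewrite mulr_ge0 ?mulr_ge0 // ltW.
  rewrite mulrACA -invfM ler_pdivlMr ?mulr_gt0 //; nra.
by apply: ler_wpM2l; rewrite ?divr_ge0 ?lerDl ?sqrtr_ge0 // ltW.
Qed.

Theorem mainTheorem12 (R : realType) (p n q : nat) (A : 'M[R]_(p, q))
  (eta1 eta2 gamma : R) (W : 'M[R]_(p, n)) (X : 'M[R]_(n, q)) :
  mx_nonneg A -> 0 < eta1 -> 0 < eta2 -> 0 < gamma ->
  dstationary A eta1 eta2 gamma W X ->
  \big[Num.max/0]_(j < q)
     (norm2 (col j A) / Num.sqrt 2 *
      (frob A / Num.sqrt eta1 + Num.sqrt eta2)) < gamma ->
  forall j : 'I_q, T1n1 (col j X) = 0.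
Proof.
move=> _ eta1_gt0 eta2_gt0 _ stat gamma_gt j; apply/eqP.
apply: contraTT gamma_gt => T_neq0; rewrite -leNgt.
have [i gamma_le] := dstationary_le_dot_col stat j (ltW eta2_gt0) T_neq0.
apply: le_trans (le_bigmax _ _ j); apply: (le_trans gamma_le).
have -> : \sum_r A r j * W r i = \sum_r col j A r 0 * col i W r 0.
  by apply: eq_bigr => r _; rewrite !mxE.
apply: le_trans (sum_mul_le_norm2 _ _) _.
apply: mul_le_threshold; rewrite ?sqrtr_ge0 //.
apply: le_trans (dstationary_frob_le stat (ltW eta1_gt0)).
by rewrite ler_wpM2l ?mulr_ge0 ?sqrtr_ge0 ?norm2_col_le_frob.
Qed.
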